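(* Let $L, M\ge1$ be integers. Let $\sigma$ be $L$-periodic, $\theta$ an affine permutation of period $L$, $\sigma'$ be $ML$-periodic and $\theta'$ an affine permutation of period $ML$. Let $\mu,\mu'$ be Maya diagrams and $\nu=(\nu_+,\nu_-)$ a pair of Young diagrams, and suppose $$\sigma\circ\theta=\sigma'\circ\theta',\qquad \mu\circ\theta=\mu'\circ\theta'.$$ Then, as formal series, $$F^{(ML)}_{(\sigma',\theta';\mu',\nu)}(u'_0,\dots,u'_{ML-1})\Big|_{u'_{i+kL}=u_i\ (0\le i\le L-1,\ 0\le k\le M-1)}=F^{(L)}_{(\sigma,\theta;\mu,\nu)}(u_0,\dots,u_{L-1}).$$ Equivalently, the non-commutative topological vertex $\mathcal{C}_{(\sigma,\theta;\mu,\nu)}$ is obtained from $\mathcal{C}_{(\sigma',\theta';\mu',\nu)}$ by imposing $q^{\theta}_i=q'^{\theta'}_i=q'^{\theta'}_{i+L}=\cdots=q'^{\theta'}_{i+(M-1)L}$ for $i=0,\dots,L-1$.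
   Context: $\mathbb{Z}_h=\mathbb{Z}+\tfrac12$. For $K\ge1$, an affine permutation of period $K$ is a bijection $\theta:\mathbb{Z}_h\to\mathbb{Z}_h$ with $\theta(h+K)=\theta(h)+K$ and $\sum_{i=1}^K\theta(i-\frac12)=\sum_{i=1}^K(i-\frac12)$; a map $f:\mathbb{Z}_h\to\{\pm1\}$ is $K$-periodic if $f(h+K)=f(h)$. A Maya diagram is a map $\lambda:\mathbb{Z}_h\to\{\pm1\}$ equal to $-1$ for $h\ll0$ and $+1$ for $h\gg0$. A Young diagram $\lambda=(\lambda_1\ge\lambda_2\ge\cdots)$ is identified with its box set $\{(x,y)\in\mathbb{Z}_{\ge0}^2: x<\lambda_{y+1}\}$; $|\lambda|$ is its number of boxes. For Young diagrams write $\lambda\overset{+}{\succ}\lambda'$ if $\lambda_1\ge\lambda'_1\ge\lambda_2\ge\lambda'_2\ge\cdots$ and $\lambda\overset{-}{\succ}\lambda'$ if the same interlacing holds for the transposes (column lengths). Fix $K\ge1$, a $K$-periodic $\sigma$, an affine permutation $\theta$ of period $K$, a Maya diagram $\mu$ and Young diagrams $\nu=(\nu_+,\nu_-)$. A transition of type $(\sigma,\theta;\mu,\nu)$ is a map $\mathcal{V}$ from $\mathbb{Z}$ to Young diagrams such that $\mathcal{V}(n)=\nu_-$ for $n\ll0$, $\mathcal{V}(n)=\nu_+$ for $n\gg0$, and for every $h\in\mathbb{Z}_h$, writing $\epsilon=\mu(\theta(h))\in\{\pm1\}$ and $s=\sigma(\theta(h))$, one has $\mathcal{V}(h-\epsilon/2)\overset{s}{\succ}\mathcal{V}(h+\epsilon/2)$.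 (It is a known fact, assumed here, that when transitions exist there is a unique minimal transition $\mathcal{V}_{\min}$ with $\mathcal{V}_{\min}(n)\subseteq\mathcal{V}(n)$ for all $n$ and all transitions $\mathcal{V}$.) For a transition $\mathcal{V}$ and $0\le i\le K-1$ set $w_i(\mathcal{V})=\sum_{n\equiv i\ (\mathrm{mod}\ K)}\big(|\mathcal{V}(n)|-|\mathcal{V}_{\min}(n)|\big)$ (a finite sum), and define the formal series in variables $u_0,\dots,u_{K-1}$ $$F^{(K)}_{(\sigma,\theta;\mu,\nu)}(u_0,\dots,u_{K-1})=\sum_{\mathcal{V}}\prod_{i=0}^{K-1}u_i^{w_i(\mathcal{V})},$$ the sum over all transitions of type $(\sigma,\theta;\mu,\nu)$. (Geometrically this is the crystal-melting sum over finite subsets of the ground-state crystal $\{(n,x,y): (x,y)\notin\mathcal{V}_{\min}(n)\}$ obeying the melting rule, with atoms on slice $n$ colored $n \bmod K$.) The non-commutative topological vertex is $\mathcal{C}_{(\sigma,\theta;\mu,\nu)}(q_0,\dots,q_{K-1})=F^{(K)}_{(\sigma,\theta;\mu,\nu)}(q^\theta_0,\dots,q^\theta_{K-1})$, where, with $q_{j+K}=q_j$, $q^\theta_i=q_{a+1/2}q_{a+3/2}\cdots q_{b-1/2}$ if $a<b$ and $q^\theta_i=q_{a-1/2}^{-1}q_{a-3/2}^{-1}\cdots q_{b+1/2}^{-1}$ if $a>b$, for $a=\theta^{-1}(i-\frac12)$, $b=\theta^{-1}(i+\frac12)$. *)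

From HB Require Import structures.
From mathcomp Require Import all_boot all_order all_algebra.
From Stdlib Require Import ClassicalEpsilon.
Set Implicit Arguments. Unset Strict Implicit. Unset Printing Implicit Defensive.
Import Order.TTheory GRing.Theory Num.Theory.
Local Open Scope ring_scope.

(* CONVENTIONS.
   - A half-integer h = j + 1/2 in Z_h is encoded by the integer j : int.
     Thus h - 1/2 = j and h + 1/2 = j + 1.
   - A sign in {+1,-1} is encoded by a bool: true = +1, false = -1.
   - A Young diagram is a weakly decreasing list of positive parts
     (lambda_1 >= lambda_2 >= ... > 0). *)

Definition young (s : seq nat) : bool := sorted geq s && all (fun x => 0 < x)%N s.
(* part s k = lambda_{k+1} (0 beyond the length) *)
Definition part (s : seq nat) (k : nat) : nat := nth 0%N s k.
(* conj_part s j = (transpose of lambda)_{j+1} = #{k | lambda_k > j} *)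
Definition conj_part (s : seq nat) (j : nat) : nat := count (fun x => j < x)%N s.
Definition nboxes (s : seq nat) : nat := sumn s.

Definition interlace (p q : nat -> nat) : Prop :=
  forall k : nat, (q k <= p k)%N /\ (p k.+1 <= q k)%N.

(* l >^{s} l' : for s = +1 interlacing of rows, for s = -1 of columns *)
Definition succ_rel (s : bool) (l l' : seq nat) : Prop :=
  if s then interlace (part l) (part l') else interlace (conj_part l) (conj_part l').

Definition subdiagram (l l' : seq nat) : Prop :=
  forall k : nat, (part l k <= part l' k)%N.

Definition periodic (K : nat) (f : int -> bool) : Prop :=
  forall j : int, f (j + K%:Z) = f j.

(* affine permutation of period K, in shifted coordinates:
   theta_h (j + 1/2) = th j + 1/2; the sum condition
   sum_{i=1}^K theta_h(i - 1/2) = sum_{i=1}^K (i - 1/2) becomes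
   sum_{i=0}^{K-1} th i = sum_{i=0}^{K-1} i. *)
Definition affine_perm (K : nat) (th : int -> int) : Prop :=
  bijective th /\ (forall j : int, th (j + K%:Z) = th j + K%:Z) /\
  \sum_(0 <= i < K) th i%:Z = \sum_(0 <= i < K) (i%:Z).

Definition maya (mu : int -> bool) : Prop :=
  exists N : nat, forall j : int,
    (j <= - N%:Z -> mu j = false) /\ (N%:Z <= j -> mu j = true).

Definition is_transition (sg : int -> bool) (th : int -> int) (mu : int -> bool)
    (nup num : seq nat) (V : int -> seq nat) : Prop :=
  (forall n : int, young (V n)) /\
  (exists N : nat, forall n : int,
      (n <= - N%:Z -> V n = num) /\ (N%:Z <= n -> V n = nup)) /\
  (forall j : int,
      if mu (th j) then succ_rel (sg (th j)) (V j) (V (j + 1))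
      else succ_rel (sg (th j)) (V (j + 1)) (V j)).

Definition is_min_transition (sg : int -> bool) (th : int -> int) (mu : int -> bool)
    (nup num : seq nat) (V0 : int -> seq nat) : Prop :=
  is_transition sg th mu nup num V0 /\
  forall V, is_transition sg th mu nup num V -> forall n : int, subdiagram (V0 n) (V n).

(* The minimal transition V_min (chosen by Hilbert epsilon; it is the unique
   minimal transition whenever transitions exist). *)
Definition Vmin (sg : int -> bool) (th : int -> int) (mu : int -> bool)
    (nup num : seq nat) : int -> seq nat :=
  epsilon (inhabits (fun _ : int => [::] : seq nat)) (is_min_transition sg th mu nup num).

(* weight_is K V0 V i c : c = sum_{n = i mod K} (|V n| - |V0 n|),
   the sum being over a window outside of which V and V0 agree. *)
Definition weight_is (K : nat) (V0 V : int -> seq nat) (i : nat) (c : int) : Prop :=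
  exists N : nat,
    (forall n : int, (N <= absz n)%N -> V n = V0 n) /\
    c = \sum_(0 <= k < (2 * N).+1)
          (let n := k%:Z - N%:Z in
           if ((n %% K%:Z)%Z == i%:Z) then (nboxes (V n))%:Z - (nboxes (V0 n))%:Z
           else 0).

(* V contributes to the coefficient of u_0^{w 0} ... u_{K-1}^{w (K-1)}
   in F^{(K)}_{(sg,th;mu,(nup,num))}. *)
Definition F_coef (K : nat) (sg : int -> bool) (th : int -> int) (mu : int -> bool)
    (nup num : seq nat) (w : nat -> int) (V : int -> seq nat) : Prop :=
  is_transition sg th mu nup num V /\
  forall i : nat, (i < K)%N -> weight_is K (Vmin sg th mu nup num) V i (w i).

(* V contributes to the coefficient of u_0^{w 0} ... u_{L-1}^{w (L-1)} in
   F^{(ML)}_{(sg,th;mu,(nup,num))} after the substitution u'_{i+kL} = u_i. *)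
Definition F_coef_collapsed (L M : nat) (sg : int -> bool) (th : int -> int)
    (mu : int -> bool) (nup num : seq nat) (w : nat -> int) (V : int -> seq nat) : Prop :=
  is_transition sg th mu nup num V /\
  exists w' : nat -> int,
    (forall j : nat, (j < M * L)%N -> weight_is (M * L) (Vmin sg th mu nup num) V j (w' j)) /\
    (forall i : nat, (i < L)%N -> w i = \sum_(k < M) w' (i + k * L)%N).

From HB Require Import structures.
From mathcomp Require Import all_boot all_order all_algebra.
From Stdlib Require Import ClassicalEpsilon FunctionalExtensionality PropExtensionality ProofIrrelevance.
Set Implicit Arguments. Unset Strict Implicit. Unset Printing Implicit Defensive.
Import Order.TTheory GRing.Theory Num.Theory.
Local Open Scope ring_scope.

(* The interlacing condition at the half-integer h only involves
   sigma(theta(h)) and mu(theta(h)); so the hypotheses sigma o theta =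
   sigma' o theta' and mu o theta = mu' o theta' say that the transitions of
   type (sigma, theta; mu, nu) and of type (sigma', theta'; mu', nu) are the
   same maps, and hence so are their minimal transitions.  It remains to
   compare the weights: the residue class {n = i mod L} is the disjoint union
   of the classes {n = i + kL mod ML}, 0 <= k < M, so the L-weight w_i of a
   transition is the sum of its ML-weights w'_(i+kL).  Hence both sides of the
   theorem range over the same transitions and the bijection is the identity. *)

Lemma is_transition_congr (sg sg' : int -> bool) (th th' : int -> int)
    (mu mu' : int -> bool) (nup num : seq nat) (V : int -> seq nat) :
  (forall j : int, sg (th j) = sg' (th' j)) ->
  (forall j : int, mu (th j) = mu' (th' j)) ->
  is_transition sg th mu nup num V <-> is_transition sg' th' mu' nup num V.
Proof.
move=> hsg hmu; rewrite /is_transition.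
split=> -[young_V [lim_V step_V]]; split=> //; split=> // j; move: (step_V j).
  by rewrite hsg hmu.
by rewrite -hsg -hmu.
Qed.

Lemma Vmin_congr (sg sg' : int -> bool) (th th' : int -> int)
    (mu mu' : int -> bool) (nup num : seq nat) :
  (forall j : int, sg (th j) = sg' (th' j)) ->
  (forall j : int, mu (th j) = mu' (th' j)) ->
  Vmin sg th mu nup num = Vmin sg' th' mu' nup num.
Proof.
move=> hsg hmu; rewrite /Vmin; congr epsilon.
apply: functional_extensionality => V0; apply: propositional_extensionality.
have tr V := is_transition_congr nup num V hsg hmu.
by split=> -[min_tr min_le]; split=> [|V /tr]; by [apply/tr | apply: min_le].
Qed.

Definition window_sum (N : nat) (g : int -> int) : int :=
  \sum_(0 <= k < (2 * N).+1) g (k%:Z - N%:Z).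

Definition weight_term (K : nat) (V0 V : int -> seq nat) (i : nat) : int -> int :=
  fun n => if (n %% K%:Z)%Z == i%:Z
           then (nboxes (V n))%:Z - (nboxes (V0 n))%:Z else 0.

Lemma weight_isE (K : nat) (V0 V : int -> seq nat) (i : nat) (c : int) :
  weight_is K V0 V i c <->
  exists N : nat, (forall n : int, (N <= absz n)%N -> V n = V0 n) /\
                  c = window_sum N (weight_term K V0 V i).
Proof. by []. Qed.

Lemma weight_term_out (K : nat) (V0 V : int -> seq nat) (i N : nat) :
  (forall n : int, (N <= absz n)%N -> V n = V0 n) ->
  forall n : int, (N <= absz n)%N -> weight_term K V0 V i n = 0.
Proof. by move=> agree n hn; rewrite /weight_term agree // subrr; case: ifP. Qed.

Lemma window_sumS (N : nat) (g : int -> int) :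
  (forall n : int, (N.+1 <= absz n)%N -> g n = 0) ->
  window_sum N.+1 g = window_sum N g.
Proof.
move=> g_out; rewrite /window_sum.
have -> : (2 * N.+1).+1 = ((2 * N).+1).+1.+1 by rewrite mulnS.
rewrite big_nat_recl // big_nat_recr //= g_out; last by rewrite sub0r abszN.
rewrite g_out; last first.
  have -> : ((2 * N).+2 = N.+1 + N.+1)%N by rewrite mul2n -addnn addnS addSn.
  by rewrite PoszD addrK.
rewrite add0r addr0; apply: eq_bigr => k _.
by rewrite -(addn1 k) -(addn1 N) !PoszD opprD addrACA subrr addr0.
Qed.

Lemma window_sum_indep (N1 N2 : nat) (g : int -> int) :
  (forall n : int, (N1 <= absz n)%N -> g n = 0) ->
  (forall n : int, (N2 <= absz n)%N -> g n = 0) ->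
  window_sum N1 g = window_sum N2 g.
Proof.
suff grow N N' : (forall n : int, (N <= absz n)%N -> g n = 0) ->
    (N <= N')%N -> window_sum N g = window_sum N' g.
  move=> out1 out2; case: (leqP N1 N2) => [|/ltnW] le; first exact: grow.
  by symmetry; apply: grow.
move=> g_out /subnKC <-; elim: (N' - N)%N => [|a IH]; first by rewrite addn0.
rewrite addnS window_sumS // => n hn; apply: g_out; apply: leq_trans hn.
by rewrite -addnS leq_addr.
Qed.

Lemma weight_is_window (K : nat) (V0 V : int -> seq nat) (i N : nat) (c : int) :
  (forall n : int, (N <= absz n)%N -> V n = V0 n) ->
  weight_is K V0 V i c -> c = window_sum N (weight_term K V0 V i).
Proof.
move=> agree /weight_isE [N' [agree' ->]].
by apply: window_sum_indep; apply: weight_term_out.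
Qed.

(* Residue classes: n = i mod L iff n = i + kL mod ML for a unique k < M,
   namely k = (n mod ML) div L. *)
Lemma residue_split (L M i : nat) (n x : int) :
  (0 < L)%N -> (0 < M)%N -> (i < L)%N ->
  (if (n %% L%:Z)%Z == i%:Z then x else 0) =
  \sum_(0 <= k < M) (if (n %% (M * L)%N%:Z)%Z == (i + k * L)%N%:Z then x else 0).
Proof.
move=> hL hM hi.
set r := absz (n %% (M * L)%N%:Z)%Z.
have r_def : (n %% (M * L)%N%:Z)%Z = r%:Z.
  by rewrite /r gez0_abs // modz_ge0 // eqz_nat muln_eq0 negb_or -!lt0n hL hM.
have r_lt : (r < M * L)%N.
  by rewrite -ltz_nat -r_def ltz_pmod // ltz_nat muln_gt0 hL hM.
have r_modL : (n %% L%:Z)%Z = (r %% L)%N%:Z.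
  rewrite -modz_nat -r_def [in LHS](divz_eq n (M * L)%N%:Z) PoszM mulrA.
  by rewrite modzMDl.
have r_eq k : (r == i + k * L)%N = (k == r %/ L)%N && (r %% L == i)%N.
  apply/eqP/andP => [->|[/eqP -> /eqP <-]]; last by rewrite addnC -divn_eq.
  by rewrite addnC divnMDl // divn_small // addn0 modnMDl modn_small.
rewrite r_modL r_def eqz_nat.
under eq_bigr => k _ do rewrite eqz_nat r_eq.
case: (r %% L == i)%N; last by rewrite big1 // => k _; rewrite andbF.
under eq_bigr => k _ do rewrite andbT.
have q_lt : (r %/ L < M)%N by rewrite ltn_divLR.
by rewrite big_mkord -big_mkcond (big_pred1 (Ordinal q_lt)).
Qed.

Lemma window_sum_split (L M i N : nat) (g : int -> int) :
  (0 < L)%N -> (0 < M)%N -> (i < L)%N ->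
  window_sum N (fun n => if (n %% L%:Z)%Z == i%:Z then g n else 0) =
  \sum_(k < M)
    window_sum N (fun n => if (n %% (M * L)%N%:Z)%Z == (i + k * L)%N%:Z
                           then g n else 0).
Proof.
move=> hL hM hi.
rewrite -(big_mkord xpredT (fun k => window_sum N (fun n =>
  if (n %% (M * L)%N%:Z)%Z == (i + k * L)%N%:Z then g n else 0))).
rewrite /window_sum exchange_big_nat.
by apply: eq_bigr => k _; apply: residue_split.
Qed.

Lemma collapsed_weightsE (L M : nat) (V0 V : int -> seq nat) (w : nat -> int) :
  (0 < L)%N -> (0 < M)%N ->
  (exists w' : nat -> int,
      (forall j : nat, (j < M * L)%N -> weight_is (M * L) V0 V j (w' j)) /\
      (forall i : nat, (i < L)%N -> w i = \sum_(k < M) w' (i + k * L)%N)) <->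
  (forall i : nat, (i < L)%N -> weight_is L V0 V i (w i)).
Proof.
move=> hL hM; have hML : (0 < M * L)%N by rewrite muln_gt0 hL hM.
have class_lt i (k : 'I_M) : (i < L)%N -> (i + k * L < M * L)%N.
  move=> hi; apply: (@leq_trans (k.+1 * L)); first by rewrite mulSn ltn_add2r.
  by rewrite leq_mul2r ltn_ord orbT.
split=> [[w' [w'_weight w_sum]] i hi | w_weight].
  have [N [agree _]] := w'_weight 0%N hML.
  apply/weight_isE; exists N; split=> //.
  rewrite w_sum // (window_sum_split _ _ hL hM hi); apply: eq_bigr => k _.
  exact: (weight_is_window agree (w'_weight _ (class_lt i k hi))).
have [N [agree _]] := w_weight 0%N hL.
exists (fun j => window_sum N (weight_term (M * L) V0 V j)); split.
  by move=> j _; apply/weight_isE; exists N.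
move=> i hi; rewrite (weight_is_window agree (w_weight i hi)).
exact: window_sum_split.
Qed.

Lemma sig_equiv_bijective (T : Type) (P Q : T -> Prop)
    (PQ : forall x, P x -> Q x) (QP : forall x, Q x -> P x) :
  bijective (fun x : {x | P x} => exist Q (sval x) (PQ _ (svalP x))).
Proof.
exists (fun y : {y | Q y} => exist P (sval y) (QP _ (svalP y)));
  by move=> [x p] /=; congr exist; apply: proof_irrelevance.
Qed.

Theorem mainTheorem2 (L M : nat) (hL : (0 < L)%N) (hM : (0 < M)%N)
  (sg : int -> bool) (th : int -> int) (sg' : int -> bool) (th' : int -> int)
  (mu mu' : int -> bool) (nup num : seq nat)
  (hsg : periodic L sg) (hth : affine_perm L th)
  (hsg' : periodic (M * L) sg') (hth' : affine_perm (M * L) th')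
  (hmu : maya mu) (hmu' : maya mu')
  (hnup : young nup) (hnum : young num)
  (hsgth : forall j : int, sg (th j) = sg' (th' j))
  (hmuth : forall j : int, mu (th j) = mu' (th' j)) :
  forall w : nat -> int,
    exists f : {V : int -> seq nat | F_coef_collapsed L M sg' th' mu' nup num w V} ->
               {V : int -> seq nat | F_coef L sg th mu nup num w V},
      bijective f.
Proof.
move=> w.
have same_transition V := is_transition_congr nup num V hsgth hmuth.
have same_Vmin := Vmin_congr nup num hsgth hmuth.
have same_coef V :
    F_coef_collapsed L M sg' th' mu' nup num w V <-> F_coef L sg th mu nup num w V.
  rewrite /F_coef_collapsed /F_coef -same_Vmin -same_transition.
  by rewrite (collapsed_weightsE _ _ _ hL hM).
by eexists; apply: (sig_equiv_bijective (fun V => proj1 (same_coef V))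
                                         (fun V => proj2 (same_coef V))).
Qed.
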